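(* Let $G$ be a finite, simple, connected graph which is not a tree. Then $G$ contains a cycle which is $W(G)/3$-supported.
   Context: For a vertex $r$ of $G$ (the root) and $x\in V(G)$, let $\ell_r(x)=d_G(r,x)$ (the level of $x$). For an integer $n\ge 0$, let $R_r(n)$ be the set of edges $xy\in E(G)$ with $\max\{\ell_r(x),\ell_r(y)\}>n$, and write $x\simeq_n y$ if $x$ and $y$ lie in the same connected component of the graph $(V(G),R_r(n))$ (in particular $x\simeq_n x$). Define $W(r)=\max_{n\ge 0}\max\{d_G(x,y): \ell_r(x)=\ell_r(y)=n,\ x\simeq_n y\}$ and the cycle width $W(G)=\max_{r\in V(G)}W(r)$. A cycle $C$ in $G$ is called $k$-supported (for a real number $k$) if $C$ can be partitioned into three edge-disjoint paths $I_1,I_2,I_3$, with $I_1\cap I_2$, $I_2\cap I_3$ and $I_3\cap I_1$ each consisting of exactly one vertex, such that for every triple of vertices $(u_1,u_2,u_3)$ with $u_i\in V(I_i)$ we have $\max_{i,j\in\{1,2,3\}} d_G(u_i,u_j)\ge k$. *)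

From mathcomp Require Import all_boot all_order all_algebra.
Set Implicit Arguments. Unset Strict Implicit. Unset Printing Implicit Defensive.
Import Order.TTheory GRing.Theory Num.Theory.

Section Graph.
Variables (T : finType) (e : rel T).

Definition simple_graph := symmetric e /\ irreflexive e.
Definition connected_graph := forall x y : T, connect e x y.

Definition walk_len (x y : T) (k : nat) : bool :=
  [exists p : k.-tuple T, path e x p && (last x p == y)].

(* Graph distance d_G(x,y): the least k with a walk of length k from x to y
   (a shortest walk has length < #|T|; correct for connected graphs). *)
Definition dist (x y : T) : nat := find (walk_len x y) (iota 0 #|T|).

Definition is_gpath (p : seq T) : bool :=
  uniq p && (if p is x :: q then path e x q else false).

Definition is_gcycle (c : seq T) : bool :=
  [&& uniq c, 3 <= size c & cycle e c].

(* Undirected edge set (both orientations) traversed by a vertex sequence. *)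
Definition pedges (p : seq T) : {set T * T} :=
  [set u | (u \in zip p (behead p)) || ((u.2, u.1) \in zip p (behead p))].

(* Edge set of a cycle c (closing edge included). *)
Definition cedges (c : seq T) : {set T * T} := pedges (c ++ take 1 c).

Definition acyclic_graph := forall c : seq T, ~~ is_gcycle c.
Definition is_tree := connected_graph /\ acyclic_graph.

Definition level (r x : T) : nat := dist r x.

Definition sim_n (r : T) (n : nat) : rel T :=
  connect (fun a b => e a b && (n < maxn (level r a) (level r b))).

(* W(r) = max over n of max{ d(x,y) : l(x)=l(y)=n, x ~_n y };
   the index n is determined as n = l(x). *)
Definition Wr (r : T) : nat :=
  \max_(x : T) \max_(y : T | (level r y == level r x) && sim_n r (level r x) x y)
     dist x y.

Definition cycle_width : nat := \max_(r : T) Wr r.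

Definition k_supported (k : rat) (c : seq T) : Prop :=
  exists I1 I2 I3 : seq T,
    [/\ is_gpath I1, is_gpath I2 & is_gpath I3] /\
    pedges I1 :|: pedges I2 :|: pedges I3 = cedges c /\
    [/\ pedges I1 :&: pedges I2 = set0, pedges I2 :&: pedges I3 = set0
      & pedges I3 :&: pedges I1 = set0] /\
    [/\ #|[set v | (v \in I1) && (v \in I2)]| = 1,
        #|[set v | (v \in I2) && (v \in I3)]| = 1
      & #|[set v | (v \in I3) && (v \in I1)]| = 1] /\
    (forall u1 u2 u3 : T, u1 \in I1 -> u2 \in I2 -> u3 \in I3 ->
       (k <= (maxn (dist u1 u2) (maxn (dist u2 u3) (dist u3 u1)))%:R)%R).

End Graph.

From mathcomp Require Import all_boot all_order all_algebra.
From mathcomp Require Import zify.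
From Stdlib Require Import Classical.
Import Order.TTheory GRing.Theory Num.Theory.
Set Implicit Arguments. Unset Strict Implicit.

(* Pick a root r and vertices x ~_n y at level n realising
   W(G) = d(x,y).  If x = y then W(G) = 0 and any cycle will do, cut into
   three arcs after its first two edges.  Otherwise (x, y is a "wide pair"),
   following BFS parents down from x and y we reach a common ancestor a
   along two vertex-disjoint "upward" paths a..x and a..y
   (each step climbs one level, so they are geodesics).  The relation
   x ~_n y gives a path x..y without repetition all of whose vertices have
   level >= n.  Gluing a..x, x..y and y..a yields a cycle.  For u1, u2, u3 on
   the three arcs, geodesicity gives d(u1,x) <= d(u1,u2) and
   d(u3,y) <= d(u3,u2), hence d(x,y) <= d(u1,u2) + d(u1,u3) + d(u3,u2),
   which is at most three times the diameter of {u1,u2,u3}. *)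

Section Distance.
Variables (T : finType) (e : rel T).

Lemma walk_lenP x y k :
  reflect (exists p, [/\ size p = k, path e x p & last x p = y]) (walk_len e x y k).
Proof.
apply: (iffP existsP) => [[p /andP[p_path /eqP p_last]]|[p [p_size p_path p_last]]].
  by exists (val p); rewrite size_tuple.
have p_size' : size p == k by apply/eqP.
by exists (Tuple p_size'); rewrite /= p_path p_last eqxx.
Qed.

Lemma dist_le x y k : walk_len e x y k -> dist e x y <= k.
Proof.
move=> walk_k; rewrite /dist; case: (ltnP k #|T|) => k_lt.
  rewrite leqNgt; apply/negP => /(before_find 0).
  by rewrite nth_iota // add0n walk_k.
by apply: leq_trans (find_size _ _) _; rewrite size_iota.
Qed.

Lemma walk_cat x y z k l :
  walk_len e x y k -> walk_len e y z l -> walk_len e x z (k + l).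
Proof.
move=> /walk_lenP [p [<- p_path p_last]] /walk_lenP [q [<- q_path q_last]].
by apply/walk_lenP; exists (p ++ q); rewrite size_cat cat_path last_cat p_last p_path.
Qed.

Lemma dist_refl x : dist e x x = 0.
Proof. by apply/eqP; rewrite -leqn0; apply: dist_le; apply/walk_lenP; exists [::]. Qed.

Lemma dist_edge x y : e x y -> dist e x y <= 1.
Proof. by move=> exy; apply: dist_le; apply/walk_lenP; exists [:: y]; rewrite /= exy. Qed.

Hypothesis conn_e : connected_graph e.

(* ... and, in a connected graph, is itself the length of a walk: a shortest
   walk is a path, hence shorter than #|T|. *)
Lemma dist_walk x y : walk_len e x y (dist e x y).
Proof.
have [p p_path ->] := connectP (conn_e x y).
case: (shortenP p_path) => q q_path q_uniq _.
have q_small : size q < #|T|.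
  by move/card_uniqP: q_uniq => /= <-; apply: max_card.
have has_walk : has (walk_len e x (last x q)) (iota 0 #|T|).
  by apply/hasP; exists (size q); rewrite ?mem_iota //; apply/walk_lenP; exists q.
have := nth_find 0 has_walk; rewrite nth_iota ?add0n //.
by move: has_walk; rewrite has_find size_iota.
Qed.

Lemma dist_eq0 x y : dist e x y = 0 -> x = y.
Proof.
by move=> d0; have := dist_walk x y; rewrite d0 => /walk_lenP [[|? ?] [//= _ _ ->]].
Qed.

Lemma dist_triangle x y z : dist e x z <= dist e x y + dist e y z.
Proof. by apply: dist_le; apply: walk_cat; apply: dist_walk. Qed.

Hypothesis sym_e : symmetric e.

Lemma path_rev x p : path e x p -> path e (last x p) (rev (belast x p)).
Proof. by move=> p_path; rewrite rev_path; apply: sub_path p_path => u v; rewrite sym_e. Qed.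

Lemma dist_sym x y : dist e x y = dist e y x.
Proof.
suff walk_sym u v k : walk_len e u v k -> walk_len e v u k.
  by apply/eqP; rewrite eqn_leq !dist_le // walk_sym // dist_walk.
move=> /walk_lenP [p [<- p_path <-]]; apply/walk_lenP.
exists (rev (belast u p)); split; rewrite ?size_rev ?size_belast ?path_rev //.
by case: p {p_path} => //= z p; rewrite rev_cons last_rcons.
Qed.

Lemma detour_bound x y u1 u2 u3 :
  dist e u1 x <= dist e u1 u2 -> dist e u3 y <= dist e u3 u2 ->
  dist e x y <= maxn (dist e u1 u2) (maxn (dist e u2 u3) (dist e u3 u1)) * 3.
Proof.
move=> near_x near_y.
have := dist_triangle x u1 y; have := dist_triangle u1 u3 y.
have := dist_sym x u1; have := dist_sym u3 u1; have := dist_sym u3 u2.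
lia.
Qed.

End Distance.

Section Levels.
Variables (T : finType) (e : rel T).
Hypotheses (sym_e : symmetric e) (conn_e : connected_graph e).
Variable r : T.
Local Notation lv := (level e r).

Lemma level_lipschitz x y : lv y <= lv x + dist e x y.
Proof. exact: dist_triangle. Qed.

Lemma level_edge x y : e x y -> lv y <= (lv x).+1.
Proof.
by move=> exy; rewrite -addn1; apply: leq_trans (level_lipschitz x y) _; rewrite leq_add2l dist_edge.
Qed.

Lemma level_eq0 x : lv x = 0 -> x = r.
Proof. by move/(dist_eq0 conn_e). Qed.

Lemma level_parent x m : lv x = m.+1 -> exists2 x', e x' x & lv x' = m.
Proof.
move=> lv_x; have := dist_walk conn_e r x; rewrite -/(lv x) lv_x.
case/walk_lenP => p [p_size p_path p_last].
case/lastP: p p_size p_path p_last => [//|p z].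
rewrite size_rcons rcons_path last_rcons => -[p_size] /andP[p_path ez] z_x.
subst z; exists (last r p) => //; apply/eqP; rewrite eqn_leq; apply/andP; split.
  by rewrite -p_size; apply: dist_le; apply/walk_lenP; exists p.
by rewrite -ltnS -lv_x level_edge.
Qed.

(* An edge counts for x ~_n y only if one endpoint lies above level n; since
   levels of neighbours differ by at most one, both endpoints then lie at
   level at least n. *)
Definition high_edge (n : nat) : rel T :=
  fun u v => e u v && (n < maxn (lv u) (lv v)).

Lemma high_path_level n x s : path (high_edge n) x s -> {in s, forall u, n <= lv u}.
Proof.
elim: s x => //= v s IH x /andP[/andP[exv n_lt] v_path] u.
rewrite inE => /orP[/eqP ->|u_s]; last exact: IH _ v_path u u_s.
have evx : e v x by rewrite sym_e.
by have := level_edge evx; move: n_lt; lia.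
Qed.

(* An upward path from a: each step climbs exactly one level, so it is a
   shortest path from a (a segment of a BFS geodesic from the root). *)
Definition upward (a : T) (s : seq T) : bool :=
  path e a s && (map lv s == iota (lv a).+1 (size s)).

Lemma upward_rcons a s z :
  upward a (rcons s z) = [&& upward a s, e (last a s) z & lv z == (lv a + size s).+1].
Proof.
rewrite /upward rcons_path map_rcons size_rcons -(addn1 (size s)) iotaD cats1 eqseq_rcons addSn.
by case: (path e a s); case: (e _ z); case: (map lv s == _).
Qed.

Lemma upward_last a s : upward a s -> lv (last a s) = lv a + size s.
Proof.
case/lastP: s => [|s z]; first by rewrite addn0.
by rewrite upward_rcons last_rcons size_rcons addnS => /and3P[_ _ /eqP].
Qed.

Lemma upward_level a s v : upward a s -> v \in s -> lv a < lv v <= lv (last a s).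
Proof.
move=> up v_s; have /andP[_ /eqP lv_s] := up.
by have := map_f lv v_s; rewrite lv_s mem_iota (upward_last up) addSn ltnS.
Qed.

Lemma upward_level_lt a s v : upward a s -> v \in s -> v != last a s -> lv v < lv (last a s).
Proof.
case/lastP: s => [//|s z]; rewrite upward_rcons last_rcons mem_rcons inE.
move=> /and3P[up _ /eqP ->] /orP[/eqP ->|v_s]; first by rewrite eqxx.
by have := upward_level up v_s; rewrite (upward_last up) ltnS => /andP[].
Qed.

Lemma upward_flat a s : upward a s -> lv (last a s) <= lv a -> last a s = a.
Proof. by case: s => [//|z s] /upward_last ->; rewrite addnS ltnNge leq_addr. Qed.

Lemma upward_uniq a s : upward a s -> uniq s.
Proof. by case/andP=> _ /eqP lv_s; apply: (@map_uniq _ _ lv); rewrite lv_s iota_uniq. Qed.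

Lemma upward_notin a s : upward a s -> a \notin s.
Proof. by move=> up; apply/negP => /(upward_level up); rewrite ltnn. Qed.

Lemma upward_dist a s u :
  upward a s -> u \in a :: s -> dist e u (last a s) + lv u <= lv (last a s).
Proof.
elim/last_ind: s u => [|s z IH] u.
  by rewrite inE => _ /eqP ->; rewrite dist_refl.
rewrite upward_rcons last_rcons -rcons_cons mem_rcons inE.
move=> /and3P[up e_z /eqP lv_z] /orP[/eqP ->|u_s]; first by rewrite dist_refl.
have := IH u up u_s; have := dist_triangle conn_e u (last a s) z.
have := dist_edge e_z; have := upward_last up; lia.
Qed.

Lemma upward_detour a s u w :
  upward a s -> u \in a :: s -> lv (last a s) <= lv w -> dist e u (last a s) <= dist e u w.
Proof. by move=> up u_s lv_w; have := upward_dist up u_s; have := level_lipschitz u w; lia. Qed.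

Lemma common_ancestor x y : lv x = lv y -> x != y ->
  exists a s1 s2, [/\ upward a s1, upward a s2, last a s1 = x, last a s2 = y
                    & {in s1, forall v, v \notin s2}].
Proof.
move lv_x : (lv x) => n; elim: n x y lv_x => [|m IH] x y lv_x lv_y neq_xy.
  by move: neq_xy; rewrite (level_eq0 lv_x) (level_eq0 (esym lv_y)) eqxx.
have [x' ex lv_x'] := level_parent lv_x; have [y' ey lv_y'] := level_parent (esym lv_y).
have [eq_xy'|neq_xy'] := eqVneq x' y'.
  rewrite -{}eq_xy' in ey.
  exists x', [:: x], [:: y]; rewrite /upward /= ex ey lv_x -lv_y lv_x' eqxx.
  by split=> // v; rewrite !inE => /eqP ->.
have [a [s1 [s2 [up1 up2 last1 last2 disj]]]] := IH x' y' lv_x' (esym lv_y') neq_xy'.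
have extend s z w : upward a s -> last a s = w -> e w z -> lv z = (lv w).+1 ->
    upward a (rcons s z).
  by move=> up last_s ewz lv_z; rewrite upward_rcons up last_s ewz lv_z -last_s (upward_last up) eqxx.
have below s w v : upward a s -> last a s = w -> v \in s -> lv v <= lv w.
  by move=> up <- /(upward_level up) /andP[].
exists a, (rcons s1 x), (rcons s2 y); split; rewrite ?last_rcons //.
- by apply: extend up1 last1 ex _; rewrite lv_x lv_x'.
- by apply: extend up2 last2 ey _; rewrite -lv_y lv_y'.
move=> v; rewrite !mem_rcons !inE negb_or => /orP[/eqP ->|v_s1].
  by rewrite neq_xy; apply/negP => /(below _ _ _ up2 last2); rewrite lv_x lv_y' ltnn.
rewrite disj // andbT; apply/eqP => v_y; have := below _ _ _ up1 last1 v_s1.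
by rewrite v_y -lv_y lv_x' ltnn.
Qed.

End Levels.

Lemma uniq_cat_notin (T : eqType) (s t : seq T) v : uniq (s ++ t) -> v \in s -> v \notin t.
Proof. by rewrite cat_uniq => /and3P[_ /hasPn disj _] v_s; apply/negP => /disj; rewrite v_s. Qed.

Lemma meet_single (T : finType) (A B : seq T) z :
  z \in A -> {in A, forall v, v \notin B} -> [set v | (v \in A) && (v \in z :: B)] = [set z].
Proof.
move=> z_A disj; apply/setP => v; rewrite !inE.
apply/idP/idP => [/andP[v_A /orP[//|v_B]]|/eqP ->]; last by rewrite z_A eqxx.
by rewrite (negbTE (disj v v_A)) in v_B.
Qed.

Section EdgeSets.
Variables (T : finType) (e : rel T).
Hypothesis irr_e : irreflexive e.

Lemma pedges_single (x : T) : pedges [:: x] = set0.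
Proof. by apply/setP => u; rewrite !inE. Qed.

Lemma pedges_cons (x y : T) s :
  pedges [:: x, y & s] = [set (x, y); (y, x)] :|: pedges (y :: s).
Proof.
apply/setP => [[u1 u2]]; rewrite !inE /= !xpair_eqE.
by case: (u1 == x); case: (u2 == y); case: (u1 == y); case: (u2 == x);
   case: ((u1, u2) \in _); case: ((u2, u1) \in _).
Qed.

Lemma pedges_cat (x : T) p q : pedges (x :: p ++ q) = pedges (x :: p) :|: pedges (last x p :: q).
Proof.
elim: p x => [|y p IH] x /=; first by rewrite pedges_single set0U.
by rewrite pedges_cons IH pedges_cons setUA.
Qed.

Lemma pedges_ends x s u : path e x s -> u \in pedges (x :: s) ->
  [/\ u.1 \in x :: s, u.2 \in x :: s & u.1 != u.2].
Proof.
elim: s x => [|y s IH] x; first by rewrite pedges_single in_set0.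
rewrite /= => /andP[exy y_path]; rewrite pedges_cons in_setU in_set2.
have neq_xy : x != y by apply: contraTneq exy => ->; rewrite irr_e.
case/orP => [/orP[]/eqP ->|/(IH _ y_path) [u1_in u2_in neq_u]].
- by rewrite !inE !eqxx /= !orbT.
- by rewrite !inE !eqxx /= !orbT eq_sym.
- by rewrite !(in_cons x) u1_in u2_in !orbT.
Qed.

Lemma pedges_disjoint x s y t z : path e x s -> path e y t ->
  [set v | (v \in x :: s) && (v \in y :: t)] = [set z] ->
  pedges (x :: s) :&: pedges (y :: t) = set0.
Proof.
move=> x_path y_path meet; apply/setP => u; rewrite in_setI in_set0; apply/negP.
case/andP => /(pedges_ends x_path) [xs1 xs2 neq_u] /(pedges_ends y_path) [yt1 yt2 _].
have : u.1 \in [set z] by rewrite -meet inE xs1 yt1.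
have : u.2 \in [set z] by rewrite -meet inE xs2 yt2.
by rewrite !inE => /eqP u2_z /eqP u1_z; rewrite u1_z u2_z eqxx in neq_u.
Qed.

End EdgeSets.

Section Gluing.
Variables (T : finType) (e : rel T).
Hypothesis irr_e : irreflexive e.
Variables (a : T) (s1 s2 t3 : seq T).
Hypotheses (s1_nonempty : s1 != [::]) (s2_nonempty : s2 != [::])
  (uniq_c : uniq (a :: s1 ++ s2 ++ t3))
  (path1 : path e a s1) (path2 : path e (last a s1) s2)
  (path3 : path e (last (last a s1) s2) (rcons t3 a)).

Local Notation b := (last a s1).
Local Notation c := (last b s2).
Local Notation I1 := (a :: s1).
Local Notation I2 := (b :: s2).
Local Notation I3 := (c :: rcons t3 a).

Let last_in (x : T) s : s != [::] -> last x s \in s.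
Proof. by case: s => //= y s _; apply: mem_last. Qed.

Let uniq_split :
  [/\ uniq I1, uniq (s2 ++ t3) & {in I1, forall v, v \notin s2 ++ t3}].
Proof.
move: uniq_c; rewrite -cat_cons cat_uniq => /and3P[uniq1 /hasPn disj uniq23].
by split=> // v v_I1; apply/negP => /disj; rewrite v_I1.
Qed.

Let a_notin_s1 : a \notin s1.
Proof. by case: uniq_split; rewrite cons_uniq => /andP[]. Qed.

Let notin12 : {in I1, forall v, v \notin s2}.
Proof. by case: uniq_split => _ _ disj v /disj; rewrite mem_cat negb_or => /andP[]. Qed.

Let notin13 : {in I1, forall v, v \notin t3}.
Proof. by case: uniq_split => _ _ disj v /disj; rewrite mem_cat negb_or => /andP[]. Qed.

Let notin23 : {in s2, forall v, v \notin t3}.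
Proof. by case: uniq_split => _ /(uniq_cat_notin). Qed.

Let s2_notin_s1 v : v \in s2 -> v \notin s1.
Proof. by move=> v_s2; apply: contraL v_s2 => v_s1; apply: notin12; rewrite inE v_s1 orbT. Qed.

Let notin_I3 : {in I2, forall v, v \notin rcons t3 a}.
Proof.
move=> v; rewrite mem_rcons inE negb_or => /orP[/eqP ->|v_s2].
  have b_s1 := last_in a s1_nonempty.
  rewrite notin13 ?inE ?b_s1 ?orbT // andbT.
  by apply: contraNneq a_notin_s1 => <-.
rewrite notin23 // andbT; apply: contraTneq v_s2 => ->.
by apply: notin12; rewrite inE eqxx.
Qed.

Let notin_I1 : {in I3, forall v, v \notin s1}.
Proof.
move=> v; rewrite inE mem_rcons inE => /or3P[/eqP ->|/eqP ->|v_t3] //.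
  exact/s2_notin_s1/last_in.
by apply: contraL v_t3 => v_s1; apply: notin13; rewrite inE v_s1 orbT.
Qed.

Let meet12 : [set v | (v \in I1) && (v \in I2)] = [set b].
Proof. exact: meet_single (mem_last _ _) notin12. Qed.

Let meet23 : [set v | (v \in I2) && (v \in I3)] = [set c].
Proof. exact: meet_single (mem_last _ _) notin_I3. Qed.

Let meet31 : [set v | (v \in I3) && (v \in I1)] = [set a].
Proof. by apply: meet_single notin_I1; rewrite inE mem_rcons inE eqxx orbT. Qed.

Let glue_cycle : is_gcycle e (a :: s1 ++ s2 ++ t3).
Proof.
rewrite /is_gcycle uniq_c /= !size_cat !rcons_cat !cat_path path1 path2 path3 !andbT.
have : 0 < size s1 by rewrite lt0n size_eq0 s1_nonempty.
have : 0 < size s2 by rewrite lt0n size_eq0 s2_nonempty.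
lia.
Qed.

Lemma glue_supported_cycle (k : rat) :
  (forall u1 u2 u3, u1 \in I1 -> u2 \in I2 -> u3 \in I3 ->
     (k <= (maxn (dist e u1 u2) (maxn (dist e u2 u3) (dist e u3 u1)))%:R)%R) ->
  is_gcycle e (a :: s1 ++ s2 ++ t3) /\ k_supported e k (a :: s1 ++ s2 ++ t3).
Proof.
move=> bound; split; first exact: glue_cycle.
exists I1, I2, I3; split; last split; last split; last split => //.
- rewrite /is_gpath /= path1 path2 path3 !andbT rcons_uniq.
  have [uniq1 uniq23 _] := uniq_split.
  move: uniq1 uniq23; rewrite cons_uniq cat_uniq => /andP[_ ->] /and3P[-> _ ->].
  by rewrite a_notin_s1 notin12 ?mem_last // notin_I3 ?mem_last // notin13 // inE eqxx.
- by rewrite /cedges /= take0 cats1 !rcons_cat !pedges_cat setUA.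
- by split; [apply: pedges_disjoint meet12 | apply: pedges_disjoint meet23
            | apply: pedges_disjoint meet31].
by rewrite meet12 meet23 meet31 !cards1.
Qed.

End Gluing.

(* Every cycle is k-supported for k <= 0: cut it after its first two edges. *)
Lemma cycle_supported_nonpos (T : finType) (e : rel T) (k : rat) c :
  irreflexive e -> is_gcycle e c -> (k <= 0)%R -> k_supported e k c.
Proof.
move=> irr_e; case: c => [|x0 [|x1 [|x2 rest]]] /and3P[uniq_c _ cycle_c] k_le0 //.
move: cycle_c => /= /and3P[e01 e12 path_rest].
have glued := @glue_supported_cycle _ _ irr_e x0 [:: x1] [:: x2] rest.
apply: (proj2 (glued _ _ uniq_c _ _ path_rest _ _)) => //=.
- by rewrite e01.
- by rewrite e12.
by move=> *; apply: le_trans k_le0 _.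
Qed.

Lemma exists_cycle (T : finType) (e : rel T) :
  connected_graph e -> ~ is_tree e -> exists c, is_gcycle e c.
Proof.
move=> conn_e not_tree; apply: NNPP => no_cycle; apply: not_tree; split=> // c.
by apply/negP => cycle_c; apply: no_cycle; exists c.
Qed.

Lemma cycle_width_attained (T : finType) (e : rel T) (v0 : T) :
  exists r x y, [/\ level e r y = level e r x, sim_n e r (level e r x) x y
                  & cycle_width e = dist e x y].
Proof.
have T_gt0 : 0 < #|T| by apply/card_gt0P; exists v0.
rewrite /cycle_width; have [r ->] := bigop.eq_bigmax (Wr e) T_gt0.
rewrite /Wr.
have [x ->] := bigop.eq_bigmax (fun x => \max_(y | (level e r y == level e r x)
                   && sim_n e r (level e r x) x y) dist e x y) T_gt0.
have P_x : (level e r x == level e r x) && sim_n e r (level e r x) x x.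
  by rewrite eqxx /sim_n connect0.
rewrite (bigop.bigmax_eq_arg x P_x); case: arg_maxnP => // y /andP[/eqP lv_y sim_xy] _.
by exists r, x, y.
Qed.

Lemma third_le (W m : nat) : W <= m * 3 -> (W%:R / 3%:R <= (m%:R : rat))%R.
Proof. by move=> W_le; rewrite ler_pdivrMr ?ltr0n // -natrM ler_nat. Qed.

Section WidePair.
Variables (T : finType) (e : rel T).
Hypotheses (sym_e : symmetric e) (irr_e : irreflexive e) (conn_e : connected_graph e).
Variables (r x y : T).
Local Notation lv := (level e r).
Hypotheses (lv_y : lv y = lv x) (sim_xy : sim_n e r (lv x) x y) (neq_xy : x != y).

Lemma high_path : exists q,
  [/\ path e x q, last x q = y, uniq (x :: q) & {in q, forall u, lv x <= lv u}].
Proof.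
have [p p_path /esym p_last] := connectP sim_xy; move: p_last.
case: (shortenP p_path) => q q_path q_uniq _ q_last; exists q; split=> //.
  by apply: sub_path q_path => u v /andP[].
exact: high_path_level q_path.
Qed.

(* The cycle a -> x (upward) -> y (high path) -> a (downward) repeats no
   vertex: the upward paths lie below level n except at x, the high path
   lies at level >= n and avoids x, and the two upward paths are disjoint. *)
Lemma glued_uniq a s1 M q :
  upward e r a s1 -> upward e r a (rcons M y) -> last a s1 = x -> lv a < lv x ->
  uniq (x :: q) -> {in q, forall u, lv x <= lv u} ->
  {in s1, forall v, v \notin rcons M y} -> uniq (a :: s1 ++ q ++ rev M).
Proof.
move=> up1 up2 last1 a_low; rewrite cons_uniq => /andP[x_q uniq_q] q_high disj.
have /andP[y_M uniq_M] : (y \notin M) && uniq M by rewrite -rcons_uniq (upward_uniq up2).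
have a_M : a \notin M by have := upward_notin up2; rewrite mem_rcons inE negb_or => /andP[].
have M_low v : v \in M -> lv v < lv x.
  move=> v_M; rewrite -lv_y -[y](last_rcons a M); apply: (upward_level_lt up2).
    by rewrite mem_rcons inE v_M orbT.
  by rewrite last_rcons; apply: contraNneq y_M => <-.
have q_notin_s1 v : v \in q -> v \notin s1.
  move=> v_q; apply/negP => v_s1; have [eq_vx|neq_vx] := eqVneq v x.
    by rewrite -eq_vx v_q in x_q.
  by have := upward_level_lt up1 v_s1; rewrite last1 => /(_ neq_vx); rewrite ltnNge q_high.
rewrite cons_uniq !mem_cat mem_rev !negb_or (upward_notin up1).
rewrite !cat_uniq rev_uniq (upward_uniq up1) uniq_q a_M uniq_M !andbT /=.
rewrite has_cat !has_rev negb_or -andbA; apply/and4P; split.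
- by apply: contraTN a_low => /q_high; rewrite -leqNgt.
- by apply/hasPn => v /q_notin_s1.
- by apply/hasPn => v v_M; apply: contraTN (M_low v v_M) => /disj; rewrite mem_rcons inE v_M orbT.
- by apply/hasPn => v v_M; apply: contraTN (M_low v v_M) => /q_high; rewrite -leqNgt.
Qed.

(* The support bound for the glued cycle: for u1 on a..x, u2 on x..y and u3
   on y..a, the endpoints x and y are no farther from u1 resp. u3 than u2 is,
   since the upward paths are geodesics and u2 lies at level >= n. *)
Lemma glued_support_bound a s1 M q u1 u2 u3 :
  upward e r a s1 -> upward e r a (rcons M y) -> last a s1 = x ->
  {in q, forall u, lv x <= lv u} ->
  u1 \in a :: s1 -> u2 \in x :: q -> u3 \in y :: rcons (rev M) a ->
  dist e x y <= maxn (dist e u1 u2) (maxn (dist e u2 u3) (dist e u3 u1)) * 3.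
Proof.
move=> up1 up2 last1 q_high u1_in u2_in u3_in.
have lv_u2 : lv x <= lv u2 by move: u2_in; rewrite inE => /orP[/eqP ->|/q_high].
have u3_in' : u3 \in a :: rcons M y.
  by move: u3_in; rewrite !inE !mem_rcons !inE mem_rev => /or3P[] ->; rewrite ?orbT.
apply: detour_bound => //; first by rewrite -last1 (upward_detour conn_e up1) // last1.
by rewrite -[y](last_rcons a M) (upward_detour conn_e up2) // last_rcons lv_y.
Qed.

Lemma wide_pair_cycle :
  exists c, is_gcycle e c /\ k_supported e ((dist e x y)%:R / 3%:R) c.
Proof.
have [a [s1 [s2 [up1 up2 last1 last2 disj]]]] :=
  common_ancestor conn_e (esym lv_y) neq_xy.
have [q [q_path q_last q_uniq q_high]] := high_path.
have a_low : lv a < lv x.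
  rewrite ltnNge; apply: contra neq_xy => x_low.
  by rewrite -last1 -last2 (upward_flat up1) ?last1 // (upward_flat up2) ?last2 ?lv_y.
case/lastP: s2 up2 last2 disj => [|M y'] up2 /=; rewrite ?last_rcons => last2 disj.
  by move: a_low; rewrite last2 lv_y ltnn.
subst y'.
have path3 : path e y (rcons (rev M) a).
  by have := path_rev sym_e (proj1 (andP up2)); rewrite last_rcons belast_rcons rev_cons.
exists (a :: s1 ++ q ++ rev M).
apply: glue_supported_cycle => //; rewrite ?last1 ?q_last //.
- by apply: contraTneq a_low => s1_nil; rewrite -last1 s1_nil ltnn.
- by apply: contra_neq neq_xy => q_nil; rewrite -q_last q_nil.
- exact: glued_uniq up1 up2 last1 a_low q_uniq q_high disj.
- by case/andP: up1.
move=> u1 u2 u3 u1_in u2_in u3_in; apply: third_le.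
exact: glued_support_bound up1 up2 last1 q_high u1_in u2_in u3_in.
Qed.

End WidePair.

Theorem mainTheorem3 (T : finType) (e : rel T) :
  simple_graph e -> connected_graph e -> ~ is_tree e ->
  exists c : seq T, is_gcycle e c /\
    k_supported e ((cycle_width e)%:R / 3%:R) c.
Proof.
move=> [sym_e irr_e] conn_e not_tree.
have [[|v0 c0] cycle_c0] := exists_cycle conn_e not_tree; first by case/and3P: cycle_c0.
have [r [x [y [lv_y sim_xy ->]]]] := cycle_width_attained e v0.
have [<-|neq_xy] := eqVneq x y.
  exists (v0 :: c0); split=> //; apply: cycle_supported_nonpos => //.
  by rewrite dist_refl mul0r.
exact: (wide_pair_cycle sym_e irr_e conn_e lv_y sim_xy neq_xy).
Qed.
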